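(* Let $D$ be an integral domain and let $\mathcal{E}(D)$ be its essential prime spectrum. The following are equivalent: (i) $D$ is a PvMD; (ii) $D$ is an essential domain and there is a subset $Y\subseteq\operatorname{Spec}(D)$ such that $\{D_{\mathfrak p}:\mathfrak p\in Y\}$ is an essential representation of $D$ and $\operatorname{Cl}^c(Y)\subseteq\mathcal{E}(D)$.
   Context: All rings are commutative with identity. For an integral domain $D$ with quotient field $K$ and a nonzero fractional ideal $I$, set $(D:I)=\{x\in K: xI\subseteq D\}$, $I^v=(D:(D:I))$, and $I^t=\bigcup\{J^v: J\subseteq I,\ J \text{ finitely generated}\}$. An ideal $I$ is a $t$-ideal if $I=(0)$ or $I=I^t$; a $t$-prime is a prime $t$-ideal; a $t$-maximal ideal is a $t$-ideal maximal among proper $t$-ideals; $t\text{-Spec}(D)$ is the set of $t$-primes (including $(0)$). $D$ is a PvMD (Prüfer $v$-multiplication domain) if $D_{\mathfrak m}$ is a valuation domain for every $t$-maximal ideal $\mathfrak m$ of $D$. A valuation overring of $D$ is essential if it equals $D_{\mathfrak p}$ for some prime $\mathfrak p$ of $D$. An essential representation of $D$ is a family of essential valuation overrings of $D$ whose intersection is $D$; $D$ is essential if it has an essential representation. $\mathcal{E}(D)=\{\mathfrak p\in\operatorname{Spec}(D): D_{\mathfrak p}\text{ is a valuation domain}\}$. The constructible topology on $\operatorname{Spec}(A)$ is the coarsest topology in which every set $D(f)=\{\mathfrak p: f\notin\mathfrak p\}$, $f\in A$, is clopen; $\operatorname{Cl}^c(Y)$ denotes the closure of $Y\subseteq\operatorname{Spec}(A)$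 in this topology. *)

(* The integral domain D is R : idomainType, its quotient
   field K is {fraction R}; D is identified with its image under x |-> x%:F. *)
From HB Require Import structures.
From mathcomp Require Import all_boot all_order all_algebra.
From mathcomp Require Import fraction.
Set Implicit Arguments. Unset Strict Implicit. Unset Printing Implicit Defensive.
Import GRing.Theory.
Local Open Scope ring_scope.

Section Defs.
Variable R : idomainType.
Local Notation K := {fraction R}.
Local Notation "x %:F" := (@FracField.tofrac R x).

Definition is_ideal (I : R -> Prop) : Prop :=
  I 0 /\ (forall x y, I x -> I y -> I (x + y)) /\ (forall r x, I x -> I (r * x)).

Definition is_prime (P : R -> Prop) : Prop :=
  is_ideal P /\ ~ P 1 /\ (forall x y, P (x * y) -> P x \/ P y).

Definition dom : K -> Prop := fun x => exists a : R, x = a%:F.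
Definition frac_set (I : R -> Prop) : K -> Prop :=
  fun x => exists a, I a /\ x = a%:F.

Definition colon (A : K -> Prop) : K -> Prop :=
  fun x => forall y, A y -> dom (x * y).
Definition vclos (A : K -> Prop) : K -> Prop := colon (colon A).

Definition gen_ideal (s : seq R) : R -> Prop :=
  fun x => exists c : seq R, size c = size s /\
                             x = \sum_(i < size s) c`_i * s`_i.

Definition tclos (I : R -> Prop) : K -> Prop :=
  fun x => exists s : seq R, (forall a, gen_ideal s a -> I a) /\
                             vclos (frac_set (gen_ideal s)) x.

Definition t_ideal (I : R -> Prop) : Prop :=
  is_ideal I /\
  ((forall x, I x <-> x = 0) \/ (forall x, frac_set I x <-> tclos I x)).

Definition t_maximal (M : R -> Prop) : Prop :=
  t_ideal M /\ ~ M 1 /\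
  (forall J, t_ideal J -> ~ J 1 -> (forall x, M x -> J x) -> forall x, J x -> M x).

Definition loc (P : R -> Prop) : K -> Prop :=
  fun x => exists a s : R, ~ P s /\ x = a%:F / s%:F.

Definition is_valuation (V : K -> Prop) : Prop :=
  forall x : K, x != 0 -> V x \/ V x^-1.

Definition PvMD : Prop :=
  forall M, t_maximal M -> is_valuation (loc M).

Definition essential_valuation_overring (V : K -> Prop) : Prop :=
  is_valuation V /\ exists P, is_prime P /\ (forall x, V x <-> loc P x).

Definition essential_rep (F : (K -> Prop) -> Prop) : Prop :=
  (forall V, F V -> essential_valuation_overring V) /\
  (forall x, (forall V, F V -> V x) <-> dom x).

Definition essential_domain : Prop := exists F, essential_rep F.

Definition Espec (P : R -> Prop) : Prop := is_prime P /\ is_valuation (loc P).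

(** constructible topology on Spec(D): the topology generated by the sets
    D(f) and their complements (coarsest topology making every D(f) clopen);
    sets are taken as sets of predicates, intersected with Spec(D) below. *)
Definition Dset (f : R) : (R -> Prop) -> Prop := fun P => ~ P f.

Inductive c_open : ((R -> Prop) -> Prop) -> Prop :=
  | c_open_D f : c_open (Dset f)
  | c_open_V f : c_open (fun P => ~ Dset f P)
  | c_open_full : c_open (fun _ => True)
  | c_open_inter U W : c_open U -> c_open W -> c_open (fun P => U P /\ W P)
  | c_open_union (F : ((R -> Prop) -> Prop) -> Prop) :
      (forall U, F U -> c_open U) -> c_open (fun P => exists U, F U /\ U P).

Definition cl_c (Y : (R -> Prop) -> Prop) (P : R -> Prop) : Prop :=
  is_prime P /\ forall U, c_open U -> U P -> exists Q, Y Q /\ is_prime Q /\ U Q.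

End Defs.

From HB Require Import structures.
From mathcomp Require Import all_boot all_order all_algebra.
From mathcomp Require Import fraction.
From mathcomp Require Import boolp classical_sets filter.
From mathcomp Require Import ring.
Set Implicit Arguments. Unset Strict Implicit. Unset Printing Implicit Defensive.
Import GRing.Theory.
Local Open Scope ring_scope.
Local Open Scope classical_set_scope.

(* (i) => (ii): take Y to be the t-maximal ideals.  In any domain, D is the
   intersection of the D_M with M t-maximal, because the ideal of denominators
   (D :_D x) of an x outside D is t-proper.  If P is in the constructible
   closure of t-Max(D) and neither x nor x^-1 lies in D_P, then the ideals of
   denominators of x and of x^-1 both lie in P.  In a PvMD their sum has
   t-closure D, so each of them is contained in the v-closure of a finitely
   generated subideal; a t-maximal Q containing these finitely many generators
   (it exists because P is in the closure) contains both ideals, contradicting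
   that D_Q is a valuation domain.
   (ii) => (i): for M t-maximal, the sets {Q in Y | s in Q}, s a finite subset
   of M, have the finite intersection property, since otherwise the essential
   representation puts 1 in (s)^v, hence in M^t = M.  The limit of Y along an
   ultrafilter refining them is a prime in the constructible closure of Y that
   contains M, so D_M is an overring of a valuation domain. *)

Lemma choice_on (T U : Type) (u0 : U) (S : T -> Prop) (P : T -> U -> Prop) :
  (forall t, S t -> exists u, P t u) -> exists f : T -> U, forall t, S t -> P t (f t).
Proof.
move=> SP; have /choice [f Pf] : forall t, exists u, S t -> P t u.
  move=> t; have [/SP [u Pu]|nSt] := pselect (S t); first by exists u.
  by exists u0.
by exists f.
Qed.

Lemma chain_bigcup_seq (T : eqType) (F : set (set T)) (N0 : set T) :
  total_on F subset -> F N0 ->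
  forall l : seq T, (forall r, r \in l -> (\bigcup_(N in F) N) r) ->
  exists2 N, F N & N0 `<=` N /\ forall r, r \in l -> N r.
Proof.
move=> Ftot FN0; elim=> [|a l IHl] Fl; first by exists N0 => //; split => // r.
have [|N FN [N0N Nl]] := IHl; first by move=> r rl; apply: Fl; rewrite inE rl orbT.
have [N' FN' N'a] := Fl a (mem_head _ _).
have [NN'|N'N] := Ftot _ _ FN FN'.
- exists N' => //; split=> [|r]; first exact: subset_trans NN'.
  by rewrite inE => /orP [/eqP -> //|/Nl/NN'].
- by exists N => //; split=> // r; rewrite inE => /orP [/eqP -> |/Nl //]; apply: N'N.
Qed.

Section PvMD.
Variable R : idomainType.
Local Notation K := {fraction R}.
Local Notation "x %:F" := (@FracField.tofrac R x).
Implicit Types (x y w : K) (a b c d e r : R) (s l : seq R) (I J M N P Q : set R).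

Lemma tofrac_inj : injective (@FracField.tofrac R).
Proof. by move=> a b /eqP; rewrite tofrac_eq => /eqP. Qed.

Lemma frac_setK I a : frac_set I a%:F -> I a.
Proof. by move=> [b [Ib /tofrac_inj ->]]. Qed.

Lemma dom_tofrac a : dom a%:F. Proof. by exists a. Qed.
Lemma dom0 : dom (0 : K). Proof. by exists 0; rewrite tofrac0. Qed.
Local Hint Resolve dom_tofrac dom0 : core.

Lemma domD x y : dom x -> dom y -> dom (x + y).
Proof. by move=> [a ->] [b ->]; rewrite -tofracD. Qed.

Lemma domM x y : dom x -> dom y -> dom (x * y).
Proof. by move=> [a ->] [b ->]; rewrite -tofracM. Qed.

Definition is_submodule (W : set K) :=
  W 0 /\ (forall x y, W x -> W y -> W (x + y)) /\ (forall a x, W x -> W (a%:F * x)).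

Lemma vclos_submodule (A : set K) : is_submodule (vclos A).
Proof.
split; [|split] => [w _|x y Ax Ay w Aw|a x Ax w Aw].
- by rewrite mul0r.
- by rewrite mulrDl; apply: domD; [apply: Ax|apply: Ay].
- by rewrite -mulrA; apply: domM => //; apply: Ax.
Qed.

Lemma gen_ideal_mem s r : r \in s -> gen_ideal s r.
Proof.
move=> rs; have lt_rs : (index r s < size s)%N by rewrite index_mem.
exists [seq (j == index r s)%:R | j <- iota 0 (size s)].
split; first by rewrite size_map size_iota.
rewrite (bigD1 (Ordinal lt_rs)) //= big1 ?addr0 => [|j /eqP nj].
  by rewrite (nth_map 0%N) ?size_iota // nth_iota // eqxx mul1r nth_index.
rewrite (nth_map 0%N) ?size_iota // nth_iota // add0n.
by case: eqP => [ej|]; [case: nj; apply: val_inj|rewrite mul0r].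
Qed.

Lemma gen_ideal_is_ideal s : is_ideal (gen_ideal s).
Proof.
pose coef (f : nat -> R) := [seq f i | i <- iota 0 (size s)].
have coefE f i : (i < size s)%N -> (coef f)`_i = f i.
  by move=> lt_is; rewrite (nth_map 0%N) ?size_iota // nth_iota.
have size_coef f : size (coef f) = size s by rewrite size_map size_iota.
split; [|split] => [|_ _ [c [_ ->]] [c' [_ ->]]|a _ [c [_ ->]]].
- exists (coef (fun=> 0)); split=> //.
  by rewrite big1 // => i _; rewrite coefE // mul0r.
- exists (coef (fun i => c`_i + c'`_i)); split=> //.
  by rewrite -big_split; apply: eq_bigr => i _; rewrite coefE // mulrDl.
- exists (coef (fun i => a * c`_i)); split=> //.
  by rewrite mulr_sumr; apply: eq_bigr => i _; rewrite coefE // mulrA.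
Qed.

Lemma gen_ideal_sub_ideal I s : is_ideal I ->
  (forall r, r \in s -> I r) -> gen_ideal s `<=` I.
Proof.
move=> [I0 [ID IM]] sI _ [c [_ ->]].
by apply: (big_ind I) => // i _; apply/IM/sI/mem_nth.
Qed.

Lemma gen_ideal_sub_submodule (W : set K) s : is_submodule W ->
  (forall r, r \in s -> W r%:F) -> forall a, gen_ideal s a -> W a%:F.
Proof.
move=> [W0 [WD WM]] sW _ [c [_ ->]]; rewrite rmorph_sum /=.
by apply: (big_ind W) => // i _; rewrite tofracM; apply/WM/sW/mem_nth.
Qed.

Lemma gen_ideal_subseq s l : {subset s <= l} -> gen_ideal s `<=` gen_ideal l.
Proof.
move=> sl; apply: gen_ideal_sub_ideal; first exact: gen_ideal_is_ideal.
by move=> r /sl; apply: gen_ideal_mem.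
Qed.

Lemma colonS (A B : set K) : A `<=` B -> colon B `<=` colon A.
Proof. by move=> AB y By z Az; apply/By/AB. Qed.

Lemma vclosS (A B : set K) : A `<=` B -> vclos A `<=` vclos B.
Proof. by move=> AB y Ay z Bz; apply/Ay/(colonS AB). Qed.

Lemma sub_vclos (A : set K) : A `<=` vclos A.
Proof. by move=> x Ax y Ay; rewrite mulrC; apply: Ay. Qed.

Lemma vclos_sub (A B : set K) : B `<=` vclos A -> vclos B `<=` vclos A.
Proof. by move=> BA z Bz w Aw; apply: Bz => b /BA Ab; rewrite mulrC; apply: Ab. Qed.

Lemma colon_gen_ideal s x : (forall r, r \in s -> dom (x * r%:F)) ->
  colon (frac_set (gen_ideal s)) x.
Proof.
move=> sx _ [a [sa ->]]; apply: (@gen_ideal_sub_submodule (fun y => dom (x * y))) sa => //.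
split; [|split] => [|y z|b y]; first by rewrite mulr0.
- by rewrite mulrDr; apply: domD.
- by rewrite mulrCA; apply: domM.
Qed.

Lemma vclos_gen_sub s l : (forall r, r \in s -> vclos (frac_set (gen_ideal l)) r%:F) ->
  vclos (frac_set (gen_ideal s)) `<=` vclos (frac_set (gen_ideal l)).
Proof.
move=> sl; apply: vclos_sub => _ [a [sa ->]].
exact: gen_ideal_sub_submodule (vclos_submodule _) sl _ sa.
Qed.

Lemma frac_setS I J : I `<=` J -> frac_set I `<=` frac_set J.
Proof. by move=> IJ _ [a [Ia ->]]; exists a; split=> //; apply: IJ. Qed.

Lemma frac_gen_ideal_mem s r : r \in s -> frac_set (gen_ideal s) r%:F.
Proof. by exists r; split=> //; apply: gen_ideal_mem. Qed.

Lemma vclos_dom I : vclos (frac_set I) `<=` @dom R.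
Proof.
move=> z /(_ 1); rewrite mulr1; apply=> _ [a [_ ->]].
by rewrite mul1r; apply: dom_tofrac.
Qed.

Lemma tclos_dom I : tclos I `<=` @dom R.
Proof. by move=> z [s [_ /vclos_dom]]. Qed.

Lemma tclos_gen M s : is_ideal M -> (forall r, r \in s -> M r) ->
  vclos (frac_set (gen_ideal s)) `<=` tclos M.
Proof. by move=> IM sM y sy; exists s; split=> //; apply: gen_ideal_sub_ideal. Qed.

Lemma frac_sub_tclos I : is_ideal I -> frac_set I `<=` tclos I.
Proof.
move=> II _ [a [Ia ->]]; apply: (tclos_gen II (s := [:: a])).
  by move=> r; rewrite inE => /eqP ->.
by apply: sub_vclos; exists a; split=> //; apply: gen_ideal_mem; rewrite inE.
Qed.

Lemma vclos_gen_mulr s b c : vclos (frac_set (gen_ideal s)) c%:F ->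
  vclos (frac_set (gen_ideal [seq r * b | r <- s])) (c * b)%:F.
Proof.
move=> sc w sxw; rewrite tofracM mulrAC -mulrA; apply: sc; apply: colon_gen_ideal => r rs.
rewrite -mulrA -tofracM [b * r]mulrC; apply: sxw; exists (r * b); split=> //.
by apply: gen_ideal_mem; apply: map_f.
Qed.

(* The second alternative is the zero ideal of a field: it is a t-ideal by
   definition although (0)^t = D there. *)
Lemma t_ideal_tclos M a : t_ideal M -> tclos M a%:F -> M a \/ (forall y, dom y).
Proof.
move=> [IM [M0|tM]] Ma; last by left; apply: (frac_setK (I := M)); apply/tM.
have [s [sM sa]] := Ma.
have colonT y : colon (frac_set (gen_ideal s)) y.
  by move=> _ [b [/sM /M0 -> ->]]; rewrite tofrac0 mulr0.
have [->|a0] := eqVneq a 0; first by left; apply/M0.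
by right=> y; have := sa (y / a%:F) (colonT _); rewrite mulrC divfK // tofrac_eq0.
Qed.

Lemma t_ideal_colon M b : is_ideal M -> (forall y, frac_set M y <-> tclos M y) ->
  t_ideal (fun d => M (d * b)).
Proof.
move=> IM tM; have [M0 [MD MM]] := IM.
have IMb : is_ideal (fun d => M (d * b)).
  split; [by rewrite mul0r|split] => [d e Md Me|r d Md].
  - by rewrite mulrDl; apply: MD.
  - by rewrite -mulrA; apply: MM.
split=> //; right=> y; split; first exact: frac_sub_tclos.
move=> [s [sMb sy]]; have [c ec] := vclos_dom sy; rewrite {y}ec in sy *.
exists c; split=> //=; apply: (frac_setK (I := M)); apply/tM.
apply: (tclos_gen IM _ (vclos_gen_mulr (b := b) sy)) => _ /mapP [r rs ->].
exact/sMb/gen_ideal_mem.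
Qed.

Lemma t_maximal_prime M : t_maximal M -> is_prime M.
Proof.
move=> [[IM tM] [M1 Mmax]]; split=> //; split=> // a b Mab.
case: tM => [M0|tM].
  by move/M0/eqP: Mab; rewrite mulf_eq0 => /orP [] /eqP /M0; [left|right].
have [Ma|nMa] := pselect (M a); [by left|right].
apply: (Mmax (fun d => M (d * a))) => [||d Md|]; rewrite ?mul1r ?(mulrC b) //.
- exact: t_ideal_colon.
- by rewrite mulrC; apply: IM.2.2.
Qed.

Definition ideal_add I J : set R := fun r => exists a b, [/\ I a, J b & r = a + b].

Lemma ideal_add_is_ideal I J : is_ideal I -> is_ideal J -> is_ideal (ideal_add I J).
Proof.
move=> [I0 [ID IM]] [J0 [JD JM]]; split; [|split].
- by exists 0, 0; rewrite addr0.
- move=> _ _ [a [b [Ia Jb ->]]] [a' [b' [Ia' Jb' ->]]].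
  by exists (a + a'), (b + b'); rewrite addrACA; split; [apply: ID|apply: JD|].
- move=> r _ [a [b [Ia Jb ->]]].
  by exists (r * a), (r * b); rewrite mulrDr; split; [apply: IM|apply: JM|].
Qed.

Lemma ideal_add_subl I J : is_ideal J -> I `<=` ideal_add I J.
Proof. by move=> [J0 _] a Ia; exists a, 0; rewrite addr0. Qed.

Lemma ideal_add_subr I J : is_ideal I -> J `<=` ideal_add I J.
Proof. by move=> [I0 _] b Jb; exists 0, b; rewrite add0r. Qed.

Lemma tclos_add_tclos A c : is_ideal A -> tclos A c%:F ->
  tclos (ideal_add A (gen_ideal [:: c])) `<=` tclos A.
Proof.
move=> IA [s [sA sc]] y [t [tAc ty]].
have /(choice_on 0) [f Hf] : forall r, ideal_add A (gen_ideal [:: c]) r ->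
    exists a, A a /\ gen_ideal [:: c] (r - a).
  by move=> _ [a [b [Aa cb ->]]]; exists a; rewrite addrAC subrr add0r.
exists ([seq f r | r <- t] ++ s); split.
  apply: gen_ideal_sub_ideal => // a; rewrite mem_cat => /orP [/mapP [r rt ->]|sa].
    by case: (Hf r (tAc _ (gen_ideal_mem rt))).
  exact/sA/gen_ideal_mem.
apply: vclos_gen_sub ty => r rt; have [Afr cr] := Hf r (tAc _ (gen_ideal_mem rt)).
have -> : r = f r + (r - f r) by rewrite addrCA subrr addr0.
rewrite tofracD; apply: (vclos_submodule _).2.1.
  by apply/sub_vclos/frac_gen_ideal_mem; rewrite mem_cat map_f.
apply: gen_ideal_sub_submodule (vclos_submodule _) _ _ cr => a; rewrite inE => /eqP ->.
apply: vclosS sc; apply/frac_setS/gen_ideal_subseq => e es.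
by rewrite mem_cat es orbT.
Qed.

Section TMaximalAbove.
Variable H : set R.
Hypothesis H_ideal : is_ideal H.
Hypothesis H_t_proper : ~ tclos H 1.

Let admissible N := [/\ is_ideal N, H `<=` N & ~ tclos N 1].

(* [set0] is allowed only because [Zorn_bigcup] needs the union of the empty
   chain to be in the family. *)
Let candidate N := N = set0 \/ admissible N.

Let bigcup_admissible (F : set (set R)) N0 :
  total_on F subset -> F `<=` candidate ->
  F N0 -> admissible N0 -> admissible (\bigcup_(N in F) N).
Proof.
move=> Ftot FP FN0 [IN0 HN0 tN0].
have Fseq := chain_bigcup_seq Ftot FN0.
have admF N : F N -> N0 `<=` N -> admissible N.
  case/FP => [-> /(_ 0)|//]; by case: IN0 => N00 _ /(_ N00).
split; [split; [|split]|by move=> r /HN0; exists N0|].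
- by exists N0 => //; case: IN0.
- move=> a b Fa Fb; have [|N FN [N0N abN]] := Fseq [:: a; b].
    by move=> r; rewrite !inE => /orP [] /eqP ->.
  have [[_ [ND _]] _ _] := admF N FN N0N.
  by exists N => //; apply: ND; apply: abN; rewrite !inE eqxx ?orbT.
- move=> r a Fa; have [|N FN [N0N aN]] := Fseq [:: a].
    by move=> e; rewrite inE => /eqP ->.
  have [[_ [_ NM]] _ _] := admF N FN N0N.
  by exists N => //; apply/NM/aN; rewrite inE.
- move=> [s [sF s1]]; have [|N FN [N0N sN]] := Fseq s.
    by move=> r /gen_ideal_mem /sF.
  have [IN _ tN] := admF N FN N0N.
  by apply: tN; apply: tclos_gen IN sN _ s1.
Qed.

Lemma t_maximal_above : exists M, t_maximal M /\ H `<=` M.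
Proof.
have [A [PA Amax]] : exists A, candidate A /\ forall B, A `<` B -> ~ candidate B.
  apply: Zorn_bigcup => F FP Ftot.
  have [[N0 FN0 admN0]|nadm] := pselect (exists2 N0, F N0 & admissible N0).
    by right; apply: bigcup_admissible FN0 admN0.
  left; apply/seteqP; split=> // r [N FN Nr].
  by case: (FP N FN) => [N0|admN]; [rewrite N0 in Nr|apply: nadm; exists N].
have maxA B : admissible B -> A `<=` B -> B `<=` A.
  by move=> admB AB; apply: contrapT => nBA; apply: (Amax B); [split|right].
have [IA HA tA] : admissible A.
  case: PA => // A0; exfalso; apply: (Amax H); last by right; split.
  by rewrite A0; split=> // /(_ 0 H_ideal.1).
exists A; split=> //; split; [split=> //; right|split].
- move=> y; split; first exact: frac_sub_tclos.
  move=> Ay; have [c ec] := tclos_dom Ay; rewrite {y}ec in Ay *.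
  exists c; split=> //.
  have IAc := ideal_add_is_ideal IA (gen_ideal_is_ideal [:: c]).
  apply: (maxA (ideal_add A (gen_ideal [:: c]))).
  + split=> //; first exact/(subset_trans HA)/ideal_add_subl/gen_ideal_is_ideal.
    by move/(tclos_add_tclos IA Ay).
  + exact/ideal_add_subl/gen_ideal_is_ideal.
  + by apply/ideal_add_subr => //; apply: gen_ideal_mem; rewrite inE.
- by move=> A1; apply/tA; rewrite -tofrac1; apply: (frac_sub_tclos IA); exists 1.
- move=> J [IJ [J0|tJ]] J1 AJ r Jr; first by move/J0: Jr => ->; case: IA.
  apply: (maxA J) Jr => //; split=> //; first exact: subset_trans AJ.
  by move/tJ; rewrite -tofrac1 => /frac_setK.
Qed.

End TMaximalAbove.

Definition den x : set R := fun d => dom (d%:F * x).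

Lemma den_ideal x : is_ideal (den x).
Proof.
split; [|split] => [|a b da db|r a da]; first by rewrite /den tofrac0 mul0r.
- by rewrite /den tofracD mulrDl; apply: domD.
- by rewrite /den tofracM -mulrA; apply: domM.
Qed.

Lemma prime0 P : is_prime P -> P 0.
Proof. by case=> [[]]. Qed.

Lemma loc_dom P x : ~ P 1 -> dom x -> loc P x.
Proof. by move=> P1 [a ->]; exists a, 1; rewrite tofrac1 invr1 mulr1. Qed.

Lemma locP P x : P 0 -> loc P x <-> exists2 d, ~ P d & den x d.
Proof.
move=> P0; split=> [[a [d [nPd ->]]]|[d nPd [a ea]]].
  have d0 : d%:F != 0 by rewrite tofrac_eq0; apply: contra_notN nPd => /eqP ->.
  by exists d => //; rewrite /den mulrC divfK.
have d0 : d%:F != 0 by rewrite tofrac_eq0; apply: contra_notN nPd => /eqP ->.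
by exists a, d; split=> //; rewrite -ea mulrC mulKf.
Qed.

Lemma locS M P : M `<=` P -> loc P `<=` loc M.
Proof. by move=> MP _ [a [d [nPd ->]]]; exists a, d; split=> // /MP. Qed.

Lemma tclos_den1 x : tclos (den x) 1 -> dom x.
Proof.
move=> [s [sx s1]]; rewrite -[x]mul1r; apply: s1; apply: colon_gen_ideal => r rs.
by rewrite mulrC; apply/sx/gen_ideal_mem.
Qed.

Lemma bigcap_loc_t_maximal x : (forall M, t_maximal M -> loc M x) <-> dom x.
Proof.
split=> [Mx|Dx M [_ [M1 _]]]; last exact: loc_dom.
apply: contrapT => nDx.
have [M [tM xM]] := t_maximal_above (den_ideal x) (contra_not (@tclos_den1 x) nDx).
have M0 := prime0 (t_maximal_prime tM).
by have /(locP _ M0) [d nMd /xM] := Mx M tM.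
Qed.

Lemma PvMD_essential_rep :
  PvMD R -> essential_rep (fun V => exists P, t_maximal P /\ V = loc P).
Proof.
move=> PV; split=> [_ [M [tM ->]]|x].
  by split; [exact: PV|exists M; split=> //; exact: t_maximal_prime].
split=> [Vx|Dx _ [M [tM ->]]]; last exact: (bigcap_loc_t_maximal x).2 Dx M tM.
by apply/bigcap_loc_t_maximal => M tM; apply: Vx; exists M.
Qed.

Lemma den_add_inv_split x r : x != 0 -> ideal_add (den x) (den x^-1) r ->
  exists p : R * R, [/\ den x p.1, den x p.2 & r%:F = p.1%:F + p.2%:F * x].
Proof.
move=> x0 [a [b [xa [g eg] ->]]]; exists (a, g).
by rewrite /den /= -eg divfK // tofracD; split.
Qed.

Lemma PvMD_tclos_den_add x : PvMD R -> x != 0 ->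
  tclos (ideal_add (den x) (den x^-1)) 1.
Proof.
move=> PV x0; apply: contrapT => nt.
have [M [tM xM]] := t_maximal_above (ideal_add_is_ideal (den_ideal x) (den_ideal x^-1)) nt.
have M0 := prime0 (t_maximal_prime tM).
case: (PV M tM x x0) => /(locP _ M0) [d nMd xd]; apply/nMd/xM.
- exact: (ideal_add_subl (den_ideal _) xd).
- exact: (ideal_add_subr (den_ideal _) xd).
Qed.

Lemma den_sub_vclos x s l : vclos (frac_set (gen_ideal s)) 1 ->
  (forall r, r \in s -> exists a g, [/\ a \in l, g \in l & r%:F = a%:F + g%:F * x]) ->
  den x `<=` fun d => vclos (frac_set (gen_ideal l)) d%:F.
Proof.
move=> s1 sl d xd w lw; rewrite -[_ * w]mul1r; apply: s1.
apply: colon_gen_ideal => r /sl [a [g [al gl ->]]].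
have -> : d%:F * w * (a%:F + g%:F * x) = d%:F * (w * a%:F) + d%:F * x * (w * g%:F).
  by ring.
by apply: domD; apply: domM => //; apply/lw/frac_gen_ideal_mem.
Qed.

Lemma PvMD_den_vfinite x : PvMD R -> x != 0 -> exists l,
  (forall r, r \in l -> den x r) /\ den x `<=` fun d => vclos (frac_set (gen_ideal l)) d%:F.
Proof.
move=> PV x0; have [s [sx s1]] := PvMD_tclos_den_add PV x0.
have /(choice_on (0, 0)) [f Hf] := den_add_inv_split x0.
exists ([seq (f r).1 | r <- s] ++ [seq (f r).2 | r <- s]); split.
  move=> a; rewrite mem_cat => /orP [] /mapP [r /gen_ideal_mem /sx /Hf [xa xg _] ->] //.
apply: den_sub_vclos s1 _ => r rs; have [_ _ er] := Hf r (sx _ (gen_ideal_mem rs)).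
exists (f r).1, (f r).2.
by rewrite !mem_cat (map_f (fun r => (f r).1) rs) (map_f (fun r => (f r).2) rs) orbT.
Qed.

Lemma c_open_subseq l : c_open (fun Q : set R => forall r, r \in l -> Q r).
Proof.
elim: l => [|a l IHl].
  suff -> : (fun Q : set R => forall r, r \in [::] -> Q r) = fun=> True by apply: c_open_full.
  by apply/funext => Q; apply/propext; split.
suff -> : (fun Q : set R => forall r, r \in a :: l -> Q r) =
    fun Q => ~ Dset a Q /\ forall r, r \in l -> Q r by apply: c_open_inter (c_open_V a) IHl.
apply/funext => Q; apply/propext; split=> [Qal|[/contrapT Qa Ql] r].
  by split=> [|r rl]; [apply; apply: Qal; rewrite mem_head|apply: Qal; rewrite inE rl orbT].
by rewrite inE => /orP [/eqP ->|/Ql].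
Qed.

Lemma cl_c_subseq Y P l : cl_c Y P -> (forall r, r \in l -> P r) ->
  exists Q, Y Q /\ forall r, r \in l -> Q r.
Proof. by move=> [_ PY] lP; have [Q [YQ [_ lQ]]] := PY _ (c_open_subseq l) lP; exists Q. Qed.

Lemma PvMD_cl_c_t_maximal P : PvMD R -> cl_c (@t_maximal R) P -> Espec P.
Proof.
move=> PV Pcl; have pP := Pcl.1; split=> // x x0; have P0 := prime0 pP.
have [Dall|nDall] := pselect (forall y, dom y).
  by left; apply: loc_dom (Dall x); case: pP => [_ []].
apply: contrapT => /not_orP [nPx nPx'].
have denP z : ~ loc P z -> den z `<=` P.
  by move=> nPz d zd; apply: contrapT => nPd; apply/nPz/(locP _ P0); exists d.
have [l [lx xl]] := PvMD_den_vfinite PV x0.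
have [l' [lx' xl']] := PvMD_den_vfinite PV (invr_neq0 x0).
have [|Q [tQ lQ]] := cl_c_subseq (l := l ++ l') Pcl.
  by move=> r; rewrite mem_cat => /orP [/lx /(denP _ nPx)|/lx' /(denP _ nPx')].
have denQ z (L : seq R) : {subset L <= l ++ l'} ->
    den z `<=` (fun d => vclos (frac_set (gen_ideal L)) d%:F) -> den z `<=` Q.
  move=> Ll zL d /zL /(tclos_gen tQ.1.1 (fun r rL => lQ r (Ll r rL))).
  by case/(t_ideal_tclos tQ.1).
have Q0 := prime0 (t_maximal_prime tQ).
have ll : {subset l <= l ++ l'} by move=> r rl; rewrite mem_cat rl.
have ll' : {subset l' <= l ++ l'} by move=> r rl; rewrite mem_cat rl orbT.
by case: (PV Q tQ x x0) => /(locP _ Q0) [d nQd xd]; apply: nQd;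
  [apply: denQ ll xl _ xd|apply: denQ ll' xl' _ xd].
Qed.

Section EssentialRepresentation.
Variable Y : set (set R).
Hypothesis Y_prime : forall P, Y P -> is_prime P.
Hypothesis Y_rep : essential_rep (fun V => exists P, Y P /\ V = loc P).

Lemma essential_rep_vclos1 s :
  (forall Q, Y Q -> exists2 r, r \in s & ~ Q r) -> vclos (frac_set (gen_ideal s)) 1.
Proof.
move=> Ys w sw; rewrite mul1r; apply/Y_rep.2 => _ [Q [YQ ->]].
have [r rs nQr] := Ys Q YQ; apply/(locP _ (prime0 (Y_prime YQ))); exists r => //.
by rewrite /den mulrC; apply/sw/frac_gen_ideal_mem.
Qed.

Lemma t_maximal_fip M s : t_maximal M -> ~ (forall y, dom y) ->
  (forall r, r \in s -> M r) -> exists Q, Y Q /\ forall r, r \in s -> Q r.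
Proof.
move=> [tM [M1 _]] nDall sM; apply: contrapT => nQ.
have s1 : vclos (frac_set (gen_ideal s)) 1%:F.
  rewrite tofrac1; apply: essential_rep_vclos1 => Q YQ; apply: contrapT => nr.
  by apply: nQ; exists Q; split=> // r rs; apply: contrapT => nQr; apply: nr; exists r.
by case: (t_ideal_tclos tM (tclos_gen tM.1 sM s1)).
Qed.

Definition ulim (G : set_system (set R)) : set R := fun r => G (fun Q => Q r).

Section UltraLimit.
Variable G : set_system (set R).
Hypothesis G_ultra : UltraFilter G.
Hypothesis GY : G Y.

Let ulimS (A B : set (set R)) : (forall Q, is_prime Q -> A Q -> B Q) -> G A -> G B.
Proof. by move=> AB GA; apply: filterS (filterI GY GA) => Q [/Y_prime /AB]. Qed.

Lemma ulim_prime : is_prime (ulim G).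
Proof.
split; [split; [|split]|split].
- by apply: ulimS filterT => Q /prime0.
- move=> a b Ga Gb; apply: ulimS (filterI Ga Gb) => Q [[_ [QD _]] _] [].
  exact: QD.
- by move=> r a; apply: ulimS => Q [[_ [_ QM]] _]; apply: QM.
- by move=> G1; apply: (filter_not_empty G); apply: ulimS G1 => Q [_ []].
- move=> a b Gab; have [Ga|Gna] := in_ultra_setVsetC (fun Q : set R => Q a) G_ultra.
    by left.
  by right; apply: ulimS (filterI Gab Gna) => Q [_ [_ QP]] [/QP []].
Qed.

Lemma c_open_ulim U : c_open U -> U (ulim G) -> G U.
Proof.
elim=> {U} [f nGf|f nnGf|_|U W _ GU _ GW [Ul Wl]|F _ GF [U [FU Ul]]].
- by case: (in_ultra_setVsetC (fun Q : set R => Q f) G_ultra).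
- by apply: filterS (contrapT nnGf) => Q Qf; apply.
- exact: filterT.
- by apply: filterI; [apply: GU|apply: GW].
- by apply: filterS (GF U FU Ul) => Q UQ; exists U.
Qed.

Lemma ulim_cl_c : cl_c Y (ulim G).
Proof.
split=> [|U cU Ul]; first exact: ulim_prime.
have [Q [YQ UQ]] := filter_ex (filterI GY (c_open_ulim cU Ul)).
by exists Q; split=> //; split=> //; apply: Y_prime.
Qed.

End UltraLimit.

Lemma cl_c_essential_PvMD : (forall P, cl_c Y P -> Espec P) -> PvMD R.
Proof.
move=> Ycl M tM.
have [Dall|nDall] := pselect (forall y, dom y).
  by move=> x _; left; apply: loc_dom (Dall x); case: tM => _ [].
pose B s := [set Q | Y Q /\ forall r, r \in s -> Q r].
have F_proper : ProperFilter (filter_from [set s : seq R | forall r, r \in s -> M r] B).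
  apply: filter_from_proper => [|s sM]; last first.
    by have [Q] := t_maximal_fip tM nDall sM; exists Q.
  apply: filter_from_filter => [|s t sM tM' ]; first by exists [::].
  exists (s ++ t) => [r|Q [YQ stQ]]; first by rewrite mem_cat => /orP [/sM|/tM'].
  by split; split=> // r rs; apply: stQ; rewrite mem_cat rs ?orbT.
have [G [G_ultra FG]] := ultraFilterLemma F_proper.
have GY : G Y by apply: FG; exists [::] => // Q [].
have [_ val_ulim] := Ycl _ (ulim_cl_c G_ultra GY).
have M_ulim : M `<=` ulim G.
  move=> r Mr; apply: FG; exists [:: r] => [a|Q [_ rQ]]; last exact/rQ/mem_head.
  by rewrite inE => /eqP ->.
by move=> x /val_ulim [] /(locS M_ulim); [left|right].
Qed.

End EssentialRepresentation.
End PvMD.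

Theorem theorem2p4 (R : idomainType) :
  PvMD R <->
  (essential_domain R /\
   exists Y : (R -> Prop) -> Prop,
     (forall P, Y P -> is_prime P) /\
     essential_rep (fun V => exists P, Y P /\ V = loc P) /\
     (forall P, cl_c Y P -> Espec P)).
Proof.
split=> [PV|[_ [Y [Y_prime [Y_rep Ycl]]]]]; last exact: cl_c_essential_PvMD Y_prime Y_rep Ycl.
have t_rep := PvMD_essential_rep PV.
split; first by exists (fun V => exists P, t_maximal P /\ V = loc P).
exists (@t_maximal R); split; first exact: t_maximal_prime.
by split=> [|P]; [exact: t_rep|exact: PvMD_cl_c_t_maximal].
Qed.
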